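(* Let $p$ be an odd prime, $k\ge 1$, and let $f:\mathbb{F}_{p^{2k}}\to\mathbb{F}_p$ satisfy Condition A with sign $\epsilon\in\{1,-1\}$. For $0\le i\le p-1$ let $D_i=\{x\in\mathbb{F}_{p^{2k}} : f(x)=i\}$. Then (1) $|D_1|=|D_2|=\cdots=|D_{p-1}|$; (2) $|D_0|=p^{2k-1}+\epsilon(p^k-p^{k-1})$ and $|D_i|=p^{2k-1}-\epsilon p^{k-1}$ for every $1\le i\le p-1$.
   Context: Let $\zeta_p$ be a primitive complex $p$-th root of unity and $\mathrm{tr}:\mathbb{F}_{p^{n}}\to\mathbb{F}_p$ the absolute trace $\mathrm{tr}(x)=\sum_{i=0}^{n-1}x^{p^i}$. For $f:\mathbb{F}_{p^n}\to\mathbb{F}_p$ the Walsh transform is $\mathcal{W}_f(b)=\sum_{x\in\mathbb{F}_{p^n}}\zeta_p^{f(x)+\mathrm{tr}(bx)}$, $b\in\mathbb{F}_{p^n}$. Condition A: $p$ is an odd prime and $f:\mathbb{F}_{p^{2k}}\to\mathbb{F}_p$ satisfies $f(0)=0$, $f(-x)=f(x)$ for all $x$; there is an integer $l$ with $\gcd(l-1,p-1)=1$ such that $f(\alpha x)=\alpha^l f(x)$ for all $\alpha\in\mathbb{F}_p$, $x\in\mathbb{F}_{p^{2k}}$; and there exist a constant $\epsilon\in\{1,-1\}$ and a function $f^*:\mathbb{F}_{p^{2k}}\to\mathbb{F}_p$ such that $\mathcal{W}_f(b)=\epsilon p^k\zeta_p^{f^*(b)}$ for all $b\in\mathbb{F}_{p^{2k}}$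 (i.e. $f$ is a weakly regular bent function; one writes $\epsilon=(-1)^{(p-1)k/2}\mu$ with $\mu=\pm1$). *)

From HB Require Import structures.
From mathcomp Require Import all_boot all_order all_algebra all_field.
Unset Printing Implicit Defensive.
Import Order.TTheory GRing.Theory Num.Theory.
Local Open Scope ring_scope.

Definition absTr {F : finFieldType} (p n : nat) (x : F) : F :=
  \sum_(i < n) x ^+ (p ^ i).

(* The element of the prime field 'F_p corresponding to an element y of F
   lying in the prime subfield {0, 1, ..., p-1} of F (default 0 otherwise). *)
Definition toFp {F : finFieldType} (p : nat) (y : F) : 'F_p :=
  odflt 0 [pick i : 'F_p | ((val i)%:R : F) == y].

Definition tr {F : finFieldType} (p n : nat) (x : F) : 'F_p :=
  toFp p (absTr p n x).

(* Walsh transform W_f(b) = sum_x zeta^(f(x) + tr(b x)), with exponents in F_p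
   read as natural numbers 0..p-1 (zeta is a p-th root of unity). *)
Definition walsh {F : finFieldType} (p n : nat) (zeta : algC)
    (f : F -> 'F_p) (b : F) : algC :=
  \sum_(x : F) zeta ^+ (val (f x + tr p n (b * x))).

Definition level_set {F : finFieldType} (p : nat) (f : F -> 'F_p) (i : 'F_p)
  : {set F} := [set x | f x == i].

From HB Require Import structures.
From mathcomp Require Import all_boot all_order all_algebra all_field.
Import Order.TTheory GRing.Theory Num.Theory.
Set Implicit Arguments.
Unset Strict Implicit.

Local Open Scope ring_scope.

(* Grouping the Walsh sum at b = 0 by the values of f gives
   sum_i |D_i| zeta^(i + tr 0) = eps p^k zeta^(f*(0)).  As the minimal
   polynomial of zeta is 1 + X + ... + X^(p-1), the only integer relations
   among the p-th roots of unity are multiples of their sum, so all |D_i| equal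
   a common value C except at one index, where |D_i| = C + eps p^k.  Since f is
   even, x |-> -x is a fixed-point-free involution on D_i \ {0}; hence |D_0| is
   odd and |D_i| is even for i <> 0, which forces the exceptional index to be 0.
   Counting sum_i |D_i| = p^(2k) then determines C. *)

Lemma sum_prim_root_expr (R : idomainType) (n : nat) (z : R) :
  (1 < n)%N -> n.-primitive_root z -> \sum_(m < n) z ^+ m = 0.
Proof.
move=> n_gt1 prim_z; have z_neq1 : z != 1.
  by rewrite -[z]expr1 -(prim_order_dvd prim_z) dvdn1 gtn_eqF.
have := expfS_eq1 z n.-1; rewrite prednK ?(ltnW n_gt1) // prim_expr_order //.
by rewrite eqxx (negbTE z_neq1) => /esym/eqP.
Qed.

Lemma prim_root_rat_poly_eq0 (n : nat) (z : algC) (q : {poly rat}) :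
  n.-primitive_root z -> (size q <= totient n)%N ->
  root (map_poly ratr q) z -> q = 0.
Proof.
move=> prim_z size_q qz0; apply: contraTeq size_q => q_neq0.
have [m [Dm _] m_dvd] := minCpolyP z.
have size_m : size m = (totient n).+1.
  rewrite -(size_map_poly (ratr : {rmorphism rat -> algC}) m) -Dm.
  by rewrite (minCpoly_cyclotomic prim_z) size_cyclotomic.
by rewrite -ltnNge -size_m; apply: dvdp_leq; rewrite // -m_dvd.
Qed.

Lemma prim_root_int_relation_const (p : nat) (z : algC) (c : nat -> int) :
  prime p -> p.-primitive_root z ->
  \sum_(m < p) (c m)%:~R * z ^+ m = 0 -> forall m, (m < p)%N -> c m = c p.-1.
Proof.
move=> pr_p prim_z rel_c.
have Dp : p = p.-1.+1 by rewrite prednK ?prime_gt0.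
pose q : {poly rat} := \poly_(m < p.-1) (c m - c p.-1)%:~R.
have q0 : q = 0.
  apply: (prim_root_rat_poly_eq0 prim_z); first by rewrite totient_prime ?size_poly.
  have -> : map_poly ratr q = \poly_(m < p.-1) (c m - c p.-1)%:~R :> {poly algC}.
    apply/polyP => i; rewrite coef_map !coef_poly.
    by case: ifP => _; [exact: ratr_int | exact: raddf0].
  apply/eqP; rewrite horner_poly.
  transitivity (\sum_(m < p) (c m - c p.-1)%:~R * z ^+ m).
    by rewrite [in RHS]Dp big_ord_recr /= subrr mul0r addr0.
  under eq_bigr do rewrite intrB mulrBl.
  by rewrite sumrB rel_c -mulr_sumr sum_prim_root_expr ?prime_gt1 // mulr0 subrr.
move=> m; rewrite [in (m < _)%N]Dp ltnS leq_eqVlt => /predU1P[-> //|lt_m].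
have := congr1 (fun r : {poly rat} => r`_m) q0.
by rewrite coef_poly lt_m coef0 => /eqP; rewrite intr_eq0 subr_eq0 => /eqP.
Qed.

Lemma Fp_prim_root_int_relation_const (p : nat) (z : algC) (d : 'F_p -> int) :
  prime p -> p.-primitive_root z ->
  \sum_(i : 'F_p) (d i)%:~R * z ^+ val i = 0 -> forall i j, d i = d j.
Proof.
move=> pr_p prim_z rel_d; pose c m : int := d (inZp m).
have rel_c : \sum_(m < (Zp_trunc (pdiv p)).+2) (c m)%:~R * z ^+ m = 0.
  by rewrite -[RHS]rel_d; apply: eq_bigr => i _; rewrite /c valZpK.
rewrite Fp_cast // in rel_c.
have d_const i : d i = c p.-1.
  have lt_i : (val i < p)%N by case: i => m /=; rewrite Fp_cast.
  by rewrite -(prim_root_int_relation_const pr_p prim_z rel_c lt_i) /c valZpK.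
by move=> i j; rewrite !d_const.
Qed.

Lemma pchar_two_neq0 (R : nzRingType) (p : nat) :
  p \in [pchar R] -> odd p -> 2%:R != 0 :> R.
Proof.
move=> pcharRp odd_p; rewrite -(dvdn_pcharf pcharRp).
apply: contraL odd_p => p_dvd2; suff -> : p = 2%N by [].
by apply/eqP; rewrite eqn_leq (dvdn_leq _ p_dvd2) ?prime_gt1 ?(pcharf_prime pcharRp).
Qed.

Lemma eqNf (F : fieldType) (x : F) : 2%:R != 0 :> F -> (- x == x) = (x == 0).
Proof.
move=> two_neq0; rewrite eq_sym -subr_eq0 opprK -mulr2n -mulr_natr.
by rewrite mulf_eq0 (negbTE two_neq0) orbF.
Qed.

Lemma even_card_involution (T : finType) (g : T -> T) (S : {set T}) :
  involutive g -> {in S, forall x, g x \in S /\ g x != x} -> ~~ odd #|S|.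
Proof.
move=> gK; have [n] := ubnP #|S|; elim: n S => // n IH S.
have [-> _ _|[x Sx] lt_S gS] := set_0Vmem S; first by rewrite cards0.
have [Sgx gx_neq_x] := gS x Sx.
have Sx_gx : g x \in S :\ x by rewrite !inE gx_neq_x.
have card_S : #|S| = #|S :\ x :\ g x|.+2.
  by rewrite (cardsD1 x) Sx (cardsD1 (g x)) Sx_gx.
rewrite card_S /= negbK; apply: IH => [|y]; first by rewrite -ltnS -card_S ltnW.
rewrite !inE => /and3P[y_neq_gx y_neq_x Sy]; have [Sgy gy_neq_y] := gS y Sy.
by rewrite (inj_eq (can_inj gK)) (canF_eq gK) y_neq_x y_neq_gx Sgy.
Qed.

Section LevelSets.

Variables (p : nat) (F : finFieldType) (f : F -> 'F_p).

Local Notation N i := #|level_set p f i|.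

Lemma sum_card_level_set : (\sum_(i : 'F_p) N i)%N = #|F|.
Proof.
rewrite -sum1_card (partition_big f xpredT) //; apply: eq_bigr => i _.
by rewrite sum1_card; apply: eq_card => x; rewrite inE.
Qed.

Lemma walsh0E (n : nat) (zeta : algC) :
  walsh p n zeta f 0 = \sum_(i : 'F_p) (N i)%:R * zeta ^+ val (i + tr p n (0 : F)).
Proof.
rewrite /walsh (partition_big f xpredT) //; apply: eq_bigr => i _.
rewrite (eq_bigr (fun=> zeta ^+ val (i + tr p n (0 : F)))) => [|x /eqP <-].
  by rewrite sumr_const mulr_natl; congr (_ *+ _); apply: eq_card => x; rewrite inE.
by rewrite mul0r.
Qed.

Lemma card_level_set_walsh0 (n : nat) (zeta : algC) (c : int) (j : 'F_p) :
  prime p -> p.-primitive_root zeta ->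
  walsh p n zeta f 0 = c%:~R * zeta ^+ val j ->
  exists C : int, forall i, (N i)%:Z = C + c * (i + tr p n (0 : F) == j)%:Z.
Proof.
move=> pr_p prim_zeta walsh0_j; set t := tr p n (0 : F).
pose d i : int := (N (i - t))%:Z - c * (i == j)%:Z.
have rel_d : \sum_(i : 'F_p) (d i)%:~R * zeta ^+ val i = 0.
  under eq_bigr do rewrite intrB mulrBl.
  rewrite sumrB (reindex_inj (addIr t)) /=.
  under eq_bigr do rewrite addrK -pmulrn.
  rewrite -walsh0E walsh0_j (bigD1 j) //= big1 => [|i /negbTE ->]; last by rewrite mulr0 mul0r.
  by rewrite eqxx mulr1 addr0 subrr.
have d_const := Fp_prim_root_int_relation_const pr_p prim_zeta rel_d.
by exists (d 0) => i; rewrite (d_const 0 (i + t)) /d addrK subrK.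
Qed.

Hypotheses (two_neq0 : 2%:R != 0 :> F) (f0 : f 0 = 0) (f_even : forall x, f (- x) = f x).

Lemma odd_card_level_set0 : odd (N 0).
Proof.
have f0_0 : 0 \in level_set p f 0 by rewrite inE f0.
rewrite (cardsD1 0) f0_0 add1n /=; apply: even_card_involution opprK _ => x.
by rewrite !inE f_even oppr_eq0 eqNf // => /andP[-> ->].
Qed.

Lemma even_card_level_set i : i != 0 -> ~~ odd (N i).
Proof.
move=> i_neq0; apply: even_card_involution opprK _ => x; rewrite !inE f_even eqNf //.
by move=> fx_i; split=> //; apply: contra_neq i_neq0 => x0; rewrite -(eqP fx_i) x0.
Qed.

Lemma card_level_set_spike (n : nat) (zeta : algC) (c : int) (j : 'F_p) :
  prime p -> odd p -> p.-primitive_root zeta ->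
  walsh p n zeta f 0 = c%:~R * zeta ^+ val j ->
  exists C : int, forall i, (N i)%:Z = C + c * (i == 0)%:Z.
Proof.
move=> pr_p odd_p prim_zeta walsh0_j.
have [C cardD] := card_level_set_walsh0 pr_p prim_zeta walsh0_j.
set t := tr p n (0 : F) in cardD.
suff t_j : t = j by exists C => i; rewrite cardD t_j -{2}(add0r j) (inj_eq (addIr j)).
apply/eqP; apply: contraT => t_neq_j.
have one_neq_opp : (1 : 'F_p) != - 1.
  by rewrite eq_sym eqNf ?oner_eq0 // (pchar_two_neq0 (pchar_Fp pr_p)).
have [i1 [i1_neq0 i1t_neq_j]] : exists i1 : 'F_p, i1 != 0 /\ i1 + t != j.
  have [e|ne] := eqVneq (1 + t) j; [exists (-1) | exists 1].
    by rewrite oppr_eq0 oner_eq0 -e (inj_eq (addIr t)) eq_sym.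
  by rewrite oner_eq0.
have := even_card_level_set i1_neq0.
suff -> : N i1 = N 0 by rewrite odd_card_level_set0.
by apply/eqP; rewrite -eqz_nat !cardD add0r (negbTE i1t_neq_j) (negbTE t_neq_j).
Qed.

End LevelSets.

Theorem lemma1 (p k : nat) (F : finFieldType) (zeta : algC)
  (f fstar : F -> 'F_p) (l : int) (eps : int) :
  prime p -> odd p -> (1 <= k)%N ->
  #|F| = (p ^ (2 * k))%N ->
  p.-primitive_root zeta ->
  (* Condition A *)
  f 0 = 0 ->
  (forall x, f (- x) = f x) ->
  coprimez (l - 1) (p%:Z - 1) ->
  (forall (a : 'F_p) (x : F), f ((val a)%:R * x) = a ^ l * f x) ->
  (eps = 1 \/ eps = -1) ->
  (forall b : F, walsh p (2 * k) zeta f b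
                 = eps%:~R * (p%:R) ^+ k * zeta ^+ (val (fstar b))) ->
  (* conclusions *)
  (forall i j : 'F_p, i != 0 -> j != 0 ->
     #|level_set p f i| = #|level_set p f j|) /\
  (#|level_set p f 0|%:Z = (p ^ (2 * k - 1))%:Z + eps * ((p ^ k)%:Z - (p ^ (k - 1))%:Z)
   /\ forall i : 'F_p, i != 0 ->
     #|level_set p f i|%:Z = (p ^ (2 * k - 1))%:Z - eps * (p ^ (k - 1))%:Z).
Proof.
move=> pr_p odd_p k_gt0 cardF prim_zeta f0 f_even _ _ _ walshE.
have two_neq0 := pchar_two_neq0 (card_finPcharP cardF pr_p) odd_p.
have walsh0 : walsh p (2 * k) zeta f 0 = (eps * (p ^ k)%:Z)%:~R * zeta ^+ val (fstar 0).
  by rewrite walshE intrM -pmulrn natrX.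
have [C cardD] := card_level_set_spike two_neq0 f0 f_even pr_p odd_p prim_zeta walsh0.
have cardD_neq0 i : i != 0 -> #|level_set p f i|%:Z = C.
  by move=> i_neq0; rewrite cardD (negbTE i_neq0) mulr0 addr0.
have sumN : C * p%:Z + eps * (p ^ k)%:Z = (p ^ (2 * k))%:Z.
  rewrite -cardF -(sum_card_level_set f) -[RHS]natz natr_sum (bigD1 0) //=.
  rewrite natz cardD eqxx mulr1.
  rewrite (eq_bigr (fun=> C)) => [|i /cardD_neq0]; last by rewrite natz.
  by rewrite sumr_const cardC1 card_Fp // addrAC -mulrS prednK ?prime_gt0 // -mulr_natr natz.
have C_eq : C = (p ^ (2 * k - 1))%:Z - eps * (p ^ (k - 1))%:Z.
  apply: (mulIf (_ : p%:Z != 0)); first by rewrite eqz_nat -lt0n prime_gt0.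
  rewrite mulrBl -mulrA -!PoszM -!expnSr !subn1 !prednK ?muln_gt0 ?k_gt0 //.
  by rewrite -sumN addrK.
split=> [i j i_neq0 j_neq0|]; first by apply/eqP; rewrite -eqz_nat !cardD_neq0.
split=> [|i /cardD_neq0 ->]; last by [].
by rewrite cardD eqxx mulr1 C_eq mulrBr addrA addrAC.
Qed.
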